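(* Let $n\in\mathbb{N}$ and let $p$ be a prime with $p>3$ and $n>2$. Let $x_1,\dots,x_{p-3}$ be distinct symbols not in $\{1,\dots,n\}$, and regard $A_n$ as the subgroup of $A_{n+(p-3)}=\mathrm{Alt}(\{1,\dots,n,x_1,\dots,x_{p-3}\})$ fixing every $x_i$. If $\sigma\in A_n$, then $\sigma^{-1}$ can be written as a product of $p$-cycles $\sigma^{-1}=\tau_1\tau_2\cdots\tau_t$, where $\tau_i\in A_{n+(p-3)}\setminus A_n$ for all $i=1,\dots,t$, and $\tau_i\notin\langle\tau_j\rangle$ for all $i\neq j$.
   Context: $A_{n+(p-3)}\setminus A_n$ denotes the even permutations of $\{1,\dots,n,x_1,\dots,x_{p-3}\}$ that move at least one of the $x_i$. $\langle\tau\rangle$ denotes the cyclic subgroup generated by $\tau$. (The empty product is the identity.) *)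

From mathcomp Require Import all_boot all_fingroup all_solvable.
Set Implicit Arguments. Unset Strict Implicit. Unset Printing Implicit Defensive.
Local Open Scope group_scope.

Definition is_cycle_of_length (T : finType) (m : nat) (s : {perm T}) : Prop :=
  exists x : T, #|porbit s x| = m /\ (forall y, y \notin porbit s x -> s y = y).

(* The ground set {1..n, x_1..x_(p-3)} is modelled as 'I_(n + (p-3));
   ordinals k < n play the role of 1..n, ordinals k >= n are the x_i. *)
Definition is_new_point (n N : nat) (k : 'I_N) : bool := n <= k.

From mathcomp Require Import all_boot all_fingroup all_solvable zify.
Set Implicit Arguments. Unset Strict Implicit. Unset Printing Implicit Defensive.
Local Open Scope group_scope.

(* Induction on the largest point of {1..n} moved by the even permutation g.
   If g moves j, then u := g j < j, and as g is not a transposition there is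
   a third point l < j.  Writing X for x_1 ... x_(p-3), the 3-cycle (j u l) is
   the product of the p-cycles (j l X u) and (j X u l)^-1, and g (j u l)^-1
   fixes j.  All factors obtained earlier fix j while both new ones move it;
   since one of two elements of order p lying in the cyclic group of the other
   generates that group, earlier and new factors are independent.  The two new
   factors are independent as well: otherwise their product (j u l), of order
   3, would lie in a group of order p. *)

Section CycleOfLength.
Variable T : finType.
Implicit Types (t : {perm T}) (x y : T).

Lemma eq_permV_fix t x : (t^-1 x == x) = (t x == x).
Proof. by rewrite -(inj_eq (@perm_inj _ t)) permKV eq_sym. Qed.

Lemma moved_of_porbit t y : 1 < #|porbit t y| -> t y != y.
Proof.
apply: contraTneq => ty; rewrite -leqNgt -(cards1 y) subset_leq_card //.
by apply/subsetP => _ /porbitP[i ->]; rewrite permX_fix ?set11.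
Qed.

Lemma cycle_of_length_expg m t : is_cycle_of_length m t -> t ^+ m = 1.
Proof.
case=> x [card_x fix_out]; apply/permP => y; rewrite perm1.
have [y_x|/fix_out ty] := boolP (y \in porbit t x); last exact: permX_fix.
have /eqP orbit_y : porbit t y == porbit t x by rewrite eq_porbit_mem.
by rewrite permX -card_x -orbit_y iter_porbit.
Qed.

Lemma order_cycle_of_length m t : is_cycle_of_length m t -> #[t] = m.
Proof.
move=> ct; have [x [card_x _]] := ct.
have m_gt0 : 0 < m by rewrite -card_x lt0n card_porbit_neq0.
apply/eqP; rewrite eqn_leq dvdn_leq ?order_dvdn ?cycle_of_length_expg //=.
by rewrite -card_x porbit.unlock leq_imset_card.
Qed.

Lemma cycle_of_length_Alt m t : odd m -> is_cycle_of_length m t -> t \in 'Alt_T.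
Proof.
move=> odd_m ct; have e : (m.+1./2 * 2 = m.+1)%N.
  by rewrite muln2 -[RHS]odd_double_half /= odd_m.
have -> : t = (t ^+ m.+1./2) ^+ 2 by rewrite -expgM e expgS cycle_of_length_expg ?mulg1.
by rewrite Alt_even expgS expg1 odd_permM addbb.
Qed.

Lemma cycle_of_lengthV m t : is_cycle_of_length m t -> is_cycle_of_length m t^-1.
Proof.
case=> x [card_x fix_out]; exists x; rewrite porbitV; split=> // y /fix_out ty.
by apply/eqP; rewrite eq_permV_fix ty.
Qed.

End CycleOfLength.

Section CyclePerm.
Variable T : finType.
Implicit Types (s : seq T) (x y : T).

(* [undup] makes the definition total; for [uniq s] it is the cycle of s. *)
Definition cycle_perm s : {perm T} := perm (can_inj (prev_next (undup_uniq s))).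

Lemma cycle_permE s x : uniq s -> cycle_perm s x = next s x.
Proof. by move=> Us; rewrite permE undup_id. Qed.

Lemma cycle_perm_out s x : x \notin s -> cycle_perm s x = x.
Proof. by move=> xs; rewrite permE next_nth mem_undup (negbTE xs). Qed.

Lemma porbit_cycle_perm s x : uniq s -> x \in s -> porbit (cycle_perm s) x =i s.
Proof.
move=> Us xs y; rewrite -(fconnect_cycle (cycle_next Us) xs).
have iterE i : (cycle_perm s ^+ i) x = iter i (next s) x.
  by rewrite permX; apply: eq_iter => z; rewrite cycle_permE.
apply/porbitP/idP => [[i ->]|/iter_findex <-]; first by rewrite iterE fconnect_iter.
by exists (findex (next s) x y); rewrite iterE.
Qed.

Lemma cycle_perm_is_cycle s : uniq s -> 0 < size s ->
  is_cycle_of_length (size s) (cycle_perm s).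
Proof.
case: s => // x s Us _; exists x; rewrite (eq_card (porbit_cycle_perm Us (mem_head _ _))).
split=> [|y]; first by rewrite (card_uniqP Us).
by rewrite porbit_cycle_perm ?mem_head // => /cycle_perm_out.
Qed.

Lemma cycle_perm_moved s x : uniq s -> 1 < size s -> x \in s -> cycle_perm s x != x.
Proof.
move=> Us s_gt1 xs; apply: moved_of_porbit.
by rewrite (eq_card (porbit_cycle_perm Us xs)) (card_uniqP Us).
Qed.

Lemma next_consecutive s1 s2 x y : uniq (s1 ++ x :: y :: s2) ->
  next (s1 ++ x :: y :: s2) x = y.
Proof. by move=> U; rewrite -(next_rot (size s1) U) rot_size_cat /= eqxx. Qed.

Lemma next_last_head s x y : uniq (y :: s ++ [:: x]) -> next (y :: s ++ [:: x]) x = y.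
Proof.
rewrite -cat1s catA => U.
by rewrite -(next_rot (size ([:: y] ++ s)) U) rot_size_cat /= eqxx.
Qed.

Lemma next_infix s1 xs y s2 x : uniq (s1 ++ xs ++ y :: s2) -> x \in xs ->
  next (s1 ++ xs ++ y :: s2) x = next (xs ++ [:: y]) x.
Proof.
move=> U xs_x; have Uxy : uniq (xs ++ [:: y]).
  by move: U; rewrite cat_uniq -cat1s catA cat_uniq => /and3P[_ _ /andP[]].
case/splitPr: xs_x U Uxy => xs1 xs2.
by case: xs2 => [|z xs2]; rewrite -!catA /= => U Uxy;
  rewrite catA !next_consecutive // -catA.
Qed.

Lemma uniq_cycle3_factors (a b c : T) xs : uniq [:: a, b, c & xs] ->
  uniq (a :: xs ++ [:: b; c]) /\ uniq (a :: c :: xs ++ [:: b]).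
Proof.
move=> U; split; rewrite (perm_uniq (s2 := [:: a, b, c & xs])) // perm_cons.
  by rewrite perm_catC.
by rewrite -[c :: xs ++ _]/((c :: xs) ++ [:: b]) perm_catC.
Qed.

(* Products compose left to right: this is (a b c)(a xs b c) = (a c xs b). *)
Lemma cycle_perm3_factor a b c xs : uniq [:: a, b, c & xs] ->
  cycle_perm [:: a; b; c] * cycle_perm (a :: xs ++ [:: b; c])
  = cycle_perm (a :: c :: xs ++ [:: b]).
Proof.
move=> U; have U3 : uniq [:: a; b; c].
  by move: U; rewrite -[[:: a, b, c & xs]]/([:: a; b; c] ++ xs) cat_uniq => /andP[].
have [Ug Ub] := uniq_cycle3_factors U.
apply/permP => x; rewrite permM !cycle_permE //.
have [->|xa] := eqVneq x a.
  rewrite (next_consecutive (s1 := [::]) (s2 := [:: c]) U3).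
  rewrite (next_consecutive (s1 := a :: xs) (s2 := [::]) Ug).
  by rewrite (next_consecutive (s1 := [::]) (s2 := xs ++ [:: b]) Ub).
have [->|xb] := eqVneq x b.
  rewrite (next_consecutive (s1 := [:: a]) (s2 := [::]) U3).
  have -> : a :: xs ++ [:: b; c] = a :: (xs ++ [:: b]) ++ [:: c] by rewrite -catA.
  by rewrite (next_last_head (s := c :: xs) Ub) next_last_head // -catA.
have [->|xc] := eqVneq x c.
  rewrite (next_last_head (s := [:: b]) U3).
  by case: xs U Ug Ub => [|x0 xs] _ Ug Ub;
    rewrite (next_consecutive (s1 := [::]) Ug) (next_consecutive (s1 := [:: a]) Ub).
have next_out s : x \notin s -> next s x = x.
  by move=> xs_x; rewrite next_nth (negbTE xs_x).
rewrite next_out ?inE ?negb_or ?xa ?xb ?xc //.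
have [xs_x|xs_x] := boolP (x \in xs).
  rewrite (next_infix (s1 := [:: a]) (s2 := [:: c]) Ug xs_x).
  by rewrite (next_infix (s1 := [:: a; c]) (s2 := [::]) Ub xs_x).
by rewrite !next_out // !(inE, mem_cat) !negb_or xa xb xc (negbTE xs_x).
Qed.

End CyclePerm.

Section CyclicIndependence.
Variable T : finType.
Implicit Types (t r : {perm T}) (x : T).

Definition cyclic_indep t r := (t \notin <[r]>) && (r \notin <[t]>).

Lemma mem_cycle_sym t r : t \in <[r]> -> #[t] = #[r] -> r \in <[t]>.
Proof.
move=> tr ord_tr; have /eqP -> : <[t]> == <[r]>.
  by rewrite eqEcard cycle_subG tr /= -/#[t] -/#[r] ord_tr.
exact: cycle_id.
Qed.

Lemma cyclic_indep_of_fix t r x : #[t] = #[r] -> t x = x -> r x != x ->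
  cyclic_indep t r.
Proof.
move=> ord_tr tx rx; have r_notin : r \notin <[t]>.
  by apply: contra rx => /cycleP[i ->]; rewrite permX_fix.
by rewrite /cyclic_indep r_notin andbT; apply: contra r_notin => /mem_cycle_sym; apply.
Qed.

End CyclicIndependence.

Lemma perm_two_support (T : finType) (g : {perm T}) x y :
  (forall k, k != x -> k != y -> g k = k) -> g x != x -> g = tperm x y.
Proof.
move=> gfix gx; have fixed_image k : g k != k -> g k \in [:: x; y].
  move=> gk; rewrite !inE; apply: contraR gk; rewrite negb_or => /andP[gkx gky].
  by rewrite -[X in _ == X](perm_inj (gfix _ gkx gky)).
have gxy : g x = y.
  by move: (fixed_image x gx); rewrite !inE (negbTE gx) => /eqP.
have gy : g y != y.
  by apply: contraNneq gx => gyy; rewrite gxy (perm_inj (etrans gxy (esym gyy))).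
have gyx : g y = x.
  by move: (fixed_image y gy); rewrite !inE (negbTE gy) orbF => /eqP.
by apply/permP => k; case: tpermP => [->|->|kx ky] //; apply: gfix; apply/eqP.
Qed.

Section OrdinalPerms.
Variable N : nat.
Implicit Types (g : {perm 'I_N}) (J : 'I_N).

Lemma perm_fix_above_le g J : (forall k : 'I_N, J < k -> g k = k) -> g J <= J.
Proof.
move=> gfix; rewrite leqNgt; apply/negP => Jg.
by move: (gfix _ Jg) => /perm_inj gJ; rewrite gJ ltnn in Jg.
Qed.

Lemma Alt_moved_top_points g J : g \in 'Alt_('I_N) ->
  (forall k : 'I_N, J < k -> g k = k) -> g J != J ->
  exists l : 'I_N, [/\ l < J, g J < J & uniq [:: J; g J; l]].
Proof.
move=> gA gfix gJ.
have [l /andP[lJ lu]|no_l] := pickP [pred l : 'I_N | (l < J) && (l != g J)].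
  exists l; split=> //; first by rewrite ltn_neqAle val_eqE gJ perm_fix_above_le.
  by rewrite /= !inE !negb_or !(eq_sym J) gJ -val_eqE ltn_eqF // eq_sym lu.
suff g_tperm : g = tperm J (g J).
  by move: gA; rewrite g_tperm Alt_even odd_tperm eq_sym gJ.
apply: perm_two_support gJ => k kJ ku; case: (ltngtP k J) => [kJ'|/gfix //|/val_inj kJ'].
  by move: (no_l k); rewrite /= kJ' ku.
by rewrite kJ' eqxx in kJ.
Qed.

End OrdinalPerms.

Section NewPoints.
Variables (n p : nat).
Hypotheses (p_prime : prime p) (p_gt3 : 3 < p).
Local Notation N := (n + (p - 3)).

Definition new_pcycle (t : {perm 'I_N}) :=
  [/\ is_cycle_of_length p t, t \in 'Alt_('I_N) &
      exists k : 'I_N, is_new_point n k && (t k != k)].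

Definition new_points : seq 'I_N := [seq rshift n k | k <- enum 'I_(p - 3)].

Lemma uniq_new_points : uniq new_points.
Proof. by rewrite map_inj_uniq ?enum_uniq //; apply: rshift_inj. Qed.

Lemma new_points_ge (k : 'I_N) : k \in new_points -> n <= k.
Proof. by case/mapP => i _ ->; rewrite leq_addr. Qed.

Lemma new_points_nonempty : new_points != [::].
Proof. by rewrite -size_eq0 size_map size_enum_ord subn_eq0 -ltnNge. Qed.

Lemma new_pcycle_cycle_perm (s : seq 'I_N) : uniq s -> size s = p ->
  {subset new_points <= s} -> new_pcycle (cycle_perm s).
Proof.
move=> Us size_s new_s; have [k kn ks] : exists2 k, k \in new_points & k \in s.
  case: new_points new_s new_points_nonempty => // k ks new_s _.
  by exists k; [exact: mem_head | exact/new_s/mem_head].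
have cs := cycle_perm_is_cycle Us.
rewrite size_s in cs; split; first exact: cs (prime_gt0 p_prime).
  apply: cycle_of_length_Alt (cs (prime_gt0 p_prime)).
  by have [p2|] := even_prime p_prime; first by move: p_gt3; rewrite p2.
by exists k; rewrite /is_new_point new_points_ge // cycle_perm_moved ?size_s ?prime_gt1.
Qed.

Lemma new_pcycleV (t : {perm 'I_N}) : new_pcycle t -> new_pcycle t^-1.
Proof.
case=> ct tA [k /andP[kn tk]]; split; [exact: cycle_of_lengthV | by rewrite groupV |].
by exists k; rewrite kn eq_permV_fix.
Qed.

Lemma order_new_pcycle (t : {perm 'I_N}) : new_pcycle t -> #[t] = p.
Proof. by case=> /order_cycle_of_length. Qed.

Lemma cycle3_new_pcycle_factor (a b c : 'I_N) : a < n -> b < n -> c < n ->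
  uniq [:: a; b; c] ->
  exists bet gam, [/\ cycle_perm [:: a; b; c] = bet * gam,
    new_pcycle bet /\ new_pcycle gam, cyclic_indep bet gam,
    bet a != a /\ gam a != a &
    forall k : 'I_N, k < n -> k \notin [:: a; b; c] -> bet k = k /\ gam k = k].
Proof.
move=> an bn cn Uabc.
have old_notin (k : 'I_N) : k < n -> k \notin new_points.
  by move=> kn; apply: contraTN kn => /new_points_ge; rewrite -leqNgt.
have U : uniq [:: a, b, c & new_points].
  rewrite -[[:: a, b, c & _]]/([:: a; b; c] ++ _) cat_uniq Uabc uniq_new_points /=.
  by rewrite andbT has_sym /= !(negbTE (old_notin _ _)).
set sb := a :: c :: new_points ++ [:: b].
set sg := a :: new_points ++ [:: b; c].
have [Usg Usb] := uniq_cycle3_factors U.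
have size_new : size new_points = (p - 3)%N by rewrite size_map size_enum_ord.
have size_sb : size sb = p by rewrite /= size_cat size_new /=; lia.
have size_sg : size sg = p by rewrite /= size_cat size_new /=; lia.
have new_b : new_pcycle (cycle_perm sb).
  by apply: new_pcycle_cycle_perm => // k k_new; rewrite /sb !(inE, mem_cat) k_new !orbT.
have new_gam : new_pcycle (cycle_perm sg)^-1.
  apply/new_pcycleV/new_pcycle_cycle_perm => // k k_new.
  by rewrite /sg !(inE, mem_cat) k_new orbT.
set C := cycle_perm [:: a; b; c].
have C_eq : C = cycle_perm sb * (cycle_perm sg)^-1.
  by rewrite -(cycle_perm3_factor U) mulgK.
have C_notin t : #[t] = p -> C \notin <[t]>.
  move=> ord_t; apply/negP => /order_dvdG; rewrite [#|_|]ord_t.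
  rewrite (order_cycle_of_length (cycle_perm_is_cycle Uabc _)) //.
  by rewrite dvdn_prime2 // eq_sym gtn_eqF.
exists (cycle_perm sb), (cycle_perm sg)^-1; split=> //.
- apply/andP; split.
    apply: contra (C_notin _ (order_new_pcycle new_gam)) => b_in_gam.
    by rewrite C_eq groupM ?cycle_id.
  apply: contra (C_notin _ (order_new_pcycle new_b)) => gam_in_b.
  by rewrite C_eq groupM ?cycle_id.
- by rewrite eq_permV_fix !cycle_perm_moved ?size_sb ?size_sg ?prime_gt1 ?mem_head.
move=> k kn; move: (old_notin k kn); rewrite !inE !negb_or => knew /and3P[ka kb kc].
split; last (apply/eqP; rewrite eq_permV_fix; apply/eqP);
  by apply: cycle_perm_out; rewrite !(inE, mem_cat) !negb_or ka kb kc knew.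
Qed.

Lemma prod_new_pcycles_fixing j : j <= n -> forall g : {perm 'I_N},
  g \in 'Alt_('I_N) -> (forall k : 'I_N, j <= k -> g k = k) ->
  exists taus : seq {perm 'I_N}, [/\ g = \prod_(t <- taus) t,
    forall t, t \in taus -> new_pcycle t /\ (forall k : 'I_N, j <= k < n -> t k = k) &
    pairwise (@cyclic_indep _) taus].
Proof.
elim: j => [|j IH] jn g gA gfix.
  by exists [::]; split=> //; rewrite big_nil; apply/permP => k; rewrite perm1 gfix.
pose J : 'I_N := Ordinal (leq_trans jn (leq_addr _ _)).
have gfix' (k : 'I_N) : J < k -> g k = k := gfix k.
have [gJ|gJ] := eqVneq (g J) J.
  have [|taus [-> new_taus indep]] := IH (ltnW jn) g gA.
    move=> k; rewrite leq_eqVlt => /predU1P[jk|/gfix //].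
    by rewrite (_ : k = J) //; apply: val_inj.
  exists taus; split=> // t /new_taus[nt tfix]; split=> // k /andP[jk kn].
  by rewrite tfix // kn ltnW.
have [l [lJ uJ U3]] := Alt_moved_top_points gA gfix' gJ.
set u := g J in uJ U3 *.
set C := cycle_perm [:: J; u; l].
have [bet [gam [C_eq [new_b new_g] indep_bg [bJ gamJ] bg_fix]]] :=
  cycle3_new_pcycle_factor (a := J) jn (ltn_trans uJ jn) (ltn_trans lJ jn) U3.
rewrite -/C in C_eq.
have CJ : C J = u.
  by rewrite cycle_permE // (next_consecutive (s1 := [::]) (s2 := [:: l])).
have CA : C \in 'Alt_('I_N).
  by case: new_b => _ bA _; case: new_g => _ gamA _; rewrite C_eq groupM.
have above_out (k : 'I_N) : J < k -> k \notin [:: J; u; l].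
  by move=> Jk; rewrite !inE -!val_eqE /= !gtn_eqF //
    ?(ltn_trans uJ Jk) ?(ltn_trans lJ Jk).
have h_fix (k : 'I_N) : j <= k -> (g * C^-1) k = k.
  rewrite permM leq_eqVlt => /predU1P[jk|Jk].
    have -> : k = J by apply: val_inj; rewrite /= jk.
    by rewrite -/u -CJ permK.
  by rewrite gfix' //; apply/eqP; rewrite eq_permV_fix cycle_perm_out ?above_out.
have [taus [h_eq new_taus indep]] := IH (ltnW jn) _ (groupM gA (groupVr CA)) h_fix.
exists (taus ++ [:: bet; gam]); split.
- by rewrite big_cat /= !big_cons big_nil mulg1 -C_eq -h_eq mulgKV.
- move=> t; rewrite mem_cat => /orP[/new_taus[nt tfix]|].
    by split=> // k /andP[jk kn]; rewrite tfix // kn ltnW.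
  have old_fix (k : 'I_N) : j < k < n -> bet k = k /\ gam k = k.
    by case/andP=> Jk kn; apply: bg_fix (above_out k Jk).
  by rewrite !inE => /orP[]/eqP->; split=> // k /old_fix[].
rewrite pairwise_cat indep /= indep_bg !andbT; apply/allrelP => t r /new_taus[nt tfix].
have tJ : t J = J by apply: tfix; rewrite leqnn jn.
by rewrite !inE => /orP[]/eqP->; apply: (cyclic_indep_of_fix (x := J));
  rewrite ?(order_new_pcycle nt) ?order_new_pcycle.
Qed.

End NewPoints.

Theorem mainTheorem8 (n p : nat) (hp : prime p) (hp3 : 3 < p) (hn : 2 < n)
  (sigma : {perm 'I_(n + (p - 3))})
  (hsA : sigma \in 'Alt_('I_(n + (p - 3))))
  (hsfix : forall k : 'I_(n + (p - 3)), is_new_point n k -> sigma k = k) :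
  exists taus : seq {perm 'I_(n + (p - 3))},
    sigma^-1 = \prod_(t <- taus) t /\
    (forall t, t \in taus ->
       [/\ is_cycle_of_length p t,
           t \in 'Alt_('I_(n + (p - 3))) &
           exists k : 'I_(n + (p - 3)), is_new_point n k && (t k != k)]) /\
    (forall i j, i < size taus -> j < size taus -> i != j ->
       nth 1 taus i \notin <[nth 1 taus j]>).
Proof.
have sigmaV_fix (k : 'I_(n + (p - 3))) : n <= k -> sigma^-1 k = k.
  by move=> /hsfix sk; apply/eqP; rewrite eq_permV_fix sk.
have [taus [sigmaV new_taus indep]] :=
  prod_new_pcycles_fixing hp hp3 (leqnn n) (groupVr hsA) sigmaV_fix.
exists taus; split=> //; split=> [t /new_taus[] //|i j ilt jlt].
move/(pairwiseP 1): indep => indep.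
case: ltngtP => // [ij|ji] _; first by case/andP: (indep i j ilt jlt ij).
by case/andP: (indep j i jlt ilt ji).
Qed.
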